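(* Let $V\subseteq\{0,1\}^n$ be nonempty and let $\preceq$ be the lexicographic term order with $x_1\succ x_2\succ\cdots\succ x_n$. Then \[ \mathcal{S}_{\mathsf{lex}}(V)=\mathcal{S}_{\mathsf{lex}}(V^0)\cup\mathcal{S}_{\mathsf{lex}}(V^1)\cup\big(n\ast(\mathcal{S}_{\mathsf{lex}}(V^0)\cap\mathcal{S}_{\mathsf{lex}}(V^1))\big). \]
   Context: For $a\in\{0,1\}$, $V^a=\{v\in\{0,1\}^{n-1}:(v,a)\in V\}$. For $W\subseteq\{0,1\}^k$, $\mathcal{S}_{\mathsf{lex}}(W)=\{\tau\subseteq[k]:\prod_{i\in\tau}x_i\notin\mathrm{in}(I(W))\}$, where $I(W)\subseteq\mathbb{R}[x_1,\dots,x_k]$ is the vanishing ideal and the initial ideal is with respect to lexicographic order $x_1\succ\cdots\succ x_k$ (so $\mathcal{S}_{\mathsf{lex}}(\emptyset)=\emptyset$). For a collection $K$ of subsets of $[n-1]$, $n\ast K=K\cup\{\sigma\cup\{n\}:\sigma\in K\}$. *)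

From HB Require Import structures.
From mathcomp Require Import all_boot all_order all_algebra.
From mathcomp Require Import reals.
From mathcomp Require Import mpoly.

Set Implicit Arguments.
Unset Strict Implicit.
Unset Printing Implicit Defensive.

Import GRing.Theory.
Local Open Scope ring_scope.

Section Defs.
Variable R : realType.

(* Points of {0,1}^k: boolean vectors indexed by 'I_k (index i stands for x_{i+1}). *)
Definition pt k (v : {ffun 'I_k -> bool}) : 'I_k -> R := fun i => (v i)%:R.

Definition vanishing k (W : {set {ffun 'I_k -> bool}}) (p : {mpoly R[k]}) : Prop :=
  forall w, w \in W -> p.@[pt w] = 0.

Definition lex_lt k (m1 m2 : 'X_{1..k}) : Prop :=
  exists i : 'I_k, (forall j : 'I_k, (j < i)%N -> m1 j = m2 j) /\ (m1 i < m2 i)%N.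

Definition is_lex_lead k (f : {mpoly R[k]}) (m : 'X_{1..k}) : Prop :=
  f != 0 /\ m \in msupp f /\ (forall m', m' \in msupp f -> m' <> m -> lex_lt m' m).

Definition ideal_gen k (G : {mpoly R[k]} -> Prop) (g : {mpoly R[k]}) : Prop :=
  exists s : seq ({mpoly R[k]} * {mpoly R[k]}),
    (forall x, x \in s -> G x.2) /\ g = \sum_(x <- s) x.1 * x.2.

Definition initial_lex k (I : {mpoly R[k]} -> Prop) : {mpoly R[k]} -> Prop :=
  ideal_gen (fun g => exists f m, I f /\ is_lex_lead f m /\ g = 'X_[m]).

Definition sqfree_mon k (tau : {set 'I_k}) : 'X_{1..k} :=
  [multinom (nat_of_bool (i \in tau)) | i < k].

Definition Slex k (W : {set {ffun 'I_k -> bool}}) : {set {set 'I_k}} :=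
  [set tau | ~~ boolp.asbool (initial_lex (vanishing W) 'X_[sqfree_mon tau])].

End Defs.

Definition ext m (v : {ffun 'I_m -> bool}) (a : bool) : {ffun 'I_m.+1 -> bool} :=
  [ffun i => match unlift ord_max i with Some j => v j | None => a end].

Definition slice m (V : {set {ffun 'I_m.+1 -> bool}}) (a : bool) : {set {ffun 'I_m -> bool}} :=
  [set v | ext v a \in V].

Definition embed m (s : {set 'I_m}) : {set 'I_m.+1} := [set lift ord_max i | i in s].

Definition embedK m (K : {set {set 'I_m}}) : {set {set 'I_m.+1}} := [set embed s | s in K].

(* n * K = K  u  { sigma u {n} : sigma in K }, with n = m+1 (index ord_max). *)
Definition coneK m (K : {set {set 'I_m}}) : {set {set 'I_m.+1}} :=
  embedK K :|: [set ord_max |: embed s | s in K].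

From HB Require Import structures.
From mathcomp Require Import all_boot all_order all_algebra.
From mathcomp Require Import reals boolp.
From mathcomp Require Import mpoly.

Set Implicit Arguments.
Unset Strict Implicit.
Unset Printing Implicit Defensive.

Import GRing.Theory.
Local Open Scope ring_scope.

(* The monomial x^mu lies in the lex initial ideal of I(W) iff mu is the
   lex-leading monomial of a polynomial vanishing on W.  Since x_n is the
   smallest variable, if f in I(V) leads with x^nu x_n^j, the slices
   f(x', 0) in I(V^0) and f(x', 1) in I(V^1) lead with x^nu whenever the
   coefficient of x^nu survives: for j = 0 in both slices, for j = 1 in at
   least one of them.  Conversely, if g in I(V^0) and h in I(V^1) lead with
   x^nu, then g (1 - x_n) and h x_n lead with x^nu x_n, and, for g and h
   normalised to leading coefficient 1, g + (h - g) x_n leads with x^nu. *)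

Lemma sumr_neq0_exists (V : nmodType) (I : eqType) (s : seq I) (F : I -> V) :
  \sum_(i <- s) F i != 0 -> exists2 i, i \in s & F i != 0.
Proof.
have [/hasP[i i_s Fi] _|/hasPn F0] := boolP (has (fun i => F i != 0) s).
  by exists i.
by rewrite big1_seq ?eqxx // => i /andP[_ /F0]; rewrite negbK => /eqP.
Qed.

Section LexOrder.
Variable k : nat.
Implicit Types mu nu : 'X_{1..k}.

Lemma lex_lt_irr mu : ~ lex_lt mu mu.
Proof. by case=> i [_]; rewrite ltnn. Qed.

Lemma lex_ltD2l d mu nu : lex_lt mu nu -> lex_lt (d + mu)%MM (d + nu)%MM.
Proof.
case=> i [eq_mu_nu lt_i]; exists i; rewrite !mnmDE ltn_add2l; split=> // j lt_ji.
by rewrite !mnmDE eq_mu_nu.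
Qed.

End LexOrder.

Section LastExponent.
Variable m : nat.
Implicit Types (mu : 'X_{1..m.+1}) (nu : 'X_{1..m}).

Definition mbelast mu : 'X_{1..m} := [multinom mu (lift ord_max i) | i < m].

Definition mrcons nu (j : nat) : 'X_{1..m.+1} :=
  [multinom (if unlift ord_max i is Some i' then nu i' else j) | i < m.+1].

Lemma mbelast_rcons nu j : mbelast (mrcons nu j) = nu.
Proof. by apply/mnmP=> i; rewrite !mnmE liftK. Qed.

Lemma mrcons_last nu j : mrcons nu j ord_max = j.
Proof. by rewrite mnmE unlift_none. Qed.

Lemma mrcons_belast mu : mrcons (mbelast mu) (mu ord_max) = mu.
Proof. by apply/mnmP=> i; rewrite mnmE; case: unliftP => [j ->|->]; rewrite ?mnmE. Qed.

Lemma eq_mrcons nu j mu :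
  (mrcons nu j == mu) = (nu == mbelast mu) && (j == mu ord_max).
Proof.
apply/eqP/andP => [<-|[/eqP-> /eqP->]]; last exact: mrcons_belast.
by rewrite mbelast_rcons mrcons_last.
Qed.

Lemma lex_lt_belast mu mu' :
  lex_lt mu mu' <->
  lex_lt (mbelast mu) (mbelast mu') \/
  mbelast mu = mbelast mu' /\ (mu ord_max < mu' ord_max)%N.
Proof.
split=> [[i [eq_lt lt_i]]|[[i [eq_lt lt_i]]|[eq_bl lt_last]]].
- case: (unliftP ord_max i) eq_lt lt_i => [i' ->|->] eq_lt lt_i.
    left; exists i'; rewrite !mnmE; split=> // j lt_ji.
    by rewrite !mnmE eq_lt ?lift_max.
  by right; split=> //; apply/mnmP=> j; rewrite !mnmE eq_lt ?lift_max.
- exists (lift ord_max i); rewrite !mnmE in lt_i; split=> // l.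
  case: (unliftP ord_max l) => [l' ->|->]; last by rewrite lift_max ltnNge ltnW.
  by rewrite !lift_max => /eq_lt; rewrite !mnmE.
- exists ord_max; split=> // l.
  case: (unliftP ord_max l) => [l' -> _|->]; last by rewrite ltnn.
  by have := congr1 (fun x : 'X_{1..m} => x l') eq_bl; rewrite !mnmE.
Qed.

End LastExponent.

Section LexLead.
Variables (R : nzRingType) (k : nat).
Implicit Types (f : {mpoly R[k]}) (mu nu : 'X_{1..k}).

Definition lex_lead f mu :=
  f@_mu != 0 /\ forall nu, f@_nu != 0 -> nu <> mu -> lex_lt nu mu.

Lemma lex_lead_le f mu nu : lex_lead f mu -> f@_nu != 0 -> lex_lt nu mu \/ nu = mu.
Proof.
move=> [_ f_lead] f_nu.
by have [->|/eqP/(f_lead _ f_nu)] := eqVneq nu mu; [right|left].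
Qed.

Lemma big_msupp1 f (F : 'X_{1..k} -> R) rho :
  {in msupp f, forall mu, mu != rho -> F mu = 0} ->
  \sum_(mu <- msupp f) f@_mu * F mu = f@_rho * F rho.
Proof.
move=> F0; have [rho_f|rho_f] := boolP (rho \in msupp f).
  rewrite (bigD1_seq rho) ?msupp_uniq //= big1_seq ?addr0 // => mu /andP[ne mu_f].
  by rewrite F0 ?mulr0.
rewrite big1_seq => [|mu /andP[_ mu_f]]; last first.
  by rewrite F0 ?mulr0 //; apply: contraNneq rho_f => <-.
by move: rho_f; rewrite mcoeff_msupp negbK => /eqP->; rewrite mul0r.
Qed.

End LexLead.

Section SliceLastVariable.
Variables (R : nzRingType) (m : nat).
Implicit Types (f : {mpoly R[m.+1]}) (g h : {mpoly R[m]}) (nu : 'X_{1..m}).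

Definition mpoly_rcons g (j : nat) : {mpoly R[m.+1]} :=
  \sum_(nu <- msupp g) g@_nu *: 'X_[mrcons nu j].

Definition mslice f (a : bool) : {mpoly R[m]} :=
  \sum_(mu <- msupp f) (f@_mu * a%:R ^+ mu ord_max) *: 'X_[mbelast mu].

Lemma mcoeff_mpoly_rcons g j nu t :
  (mpoly_rcons g j)@_(mrcons nu t) = if t == j then g@_nu else 0.
Proof.
rewrite /mpoly_rcons raddf_sum /=; under eq_bigr do rewrite mcoeffZ mcoeffX eq_mrcons.
rewrite mbelast_rcons mrcons_last eq_sym; case: eqP => _; last first.
  by rewrite big1 // => nu' _; rewrite andbF mulr0.
under eq_bigr do rewrite andbT.
by rewrite (big_msupp1 (rho := nu)) ?eqxx ?mulr1 // => nu' _ /negbTE->.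
Qed.

Lemma mcoeff_mslice f a nu : (mslice f a)@_nu =
  \sum_(mu <- msupp f) f@_mu * (a%:R ^+ mu ord_max * (mbelast mu == nu)%:R).
Proof.
by rewrite /mslice raddf_sum /=; apply: eq_bigr => mu _; rewrite mcoeffZ mcoeffX mulrA.
Qed.

Lemma mcoeff_mslice0 f nu : (mslice f false)@_nu = f@_(mrcons nu 0).
Proof.
rewrite mcoeff_mslice (big_msupp1 (rho := mrcons nu 0)).
  by rewrite mrcons_last mbelast_rcons eqxx !mulr1.
move=> mu _ ne; rewrite expr0n -natrM mulnb; case: andP => // -[/eqP last0 /eqP bl_mu].
by case/eqP: ne; rewrite -bl_mu -last0 mrcons_belast.
Qed.

Lemma mcoeff_mslice1 f nu j :
  (forall t, f@_(mrcons nu t) != 0 -> t = j) -> (mslice f true)@_nu = f@_(mrcons nu j).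
Proof.
move=> only_j; rewrite mcoeff_mslice (big_msupp1 (rho := mrcons nu j)).
  by rewrite mbelast_rcons eqxx expr1n !mulr1.
move=> mu; rewrite mcoeff_msupp expr1n mul1r => f_mu ne; case: eqP => // bl_mu.
case/eqP: ne; rewrite -(mrcons_belast mu) bl_mu (only_j (mu ord_max)) //.
by rewrite -bl_mu mrcons_belast.
Qed.

Lemma mslice_mcoeff_neq0 f a nu :
  (mslice f a)@_nu != 0 -> exists2 mu, f@_mu != 0 & mbelast mu = nu.
Proof.
rewrite mcoeff_mslice => /sumr_neq0_exists[mu mu_f].
have [<- _|_] := eqVneq (mbelast mu) nu; first by exists mu; rewrite -?mcoeff_msupp.
by rewrite !mulr0 eqxx.
Qed.

Lemma lex_lead_rcons f nu j :
  f@_(mrcons nu j) != 0 ->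
  (forall nu' t, f@_(mrcons nu' t) != 0 -> lex_lt nu' nu \/ nu' = nu /\ (t <= j)%N) ->
  lex_lead f (mrcons nu j).
Proof.
move=> f_nu bound; split=> // mu; rewrite -(mrcons_belast mu).
case/bound=> [lt_nu|[-> le_tj]] ne;
  apply/lex_lt_belast; rewrite !mbelast_rcons !mrcons_last; first by left.
by right; rewrite ltn_neqAle le_tj andbT; split=> //; apply: contra_notN ne => /eqP->.
Qed.

Lemma lex_lead_rcons_le f nu j t :
  lex_lead f (mrcons nu j) -> f@_(mrcons nu t) != 0 -> (t <= j)%N.
Proof.
move=> f_lead /(lex_lead_le f_lead)[/lex_lt_belast|/eqP].
  by rewrite !mbelast_rcons !mrcons_last => -[/lex_lt_irr|[_ /ltnW]].
by rewrite eq_mrcons mrcons_last => /andP[_ /eqP->].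
Qed.

Lemma lex_lead_mslice f a nu j :
  lex_lead f (mrcons nu j) -> (mslice f a)@_nu != 0 -> lex_lead (mslice f a) nu.
Proof.
move=> [_ f_lead] s_nu; split=> // nu' /mslice_mcoeff_neq0[mu f_mu <-] ne.
have mu_nu : mu <> mrcons nu j by move=> mu_nu; apply: ne; rewrite mu_nu mbelast_rcons.
by case/lex_lt_belast: (f_lead _ f_mu mu_nu) => [|[]]; rewrite mbelast_rcons.
Qed.

End SliceLastVariable.

Section LeadingMonomials.
Variable R : realType.

Lemma is_lex_leadE k (f : {mpoly R[k]}) mu : is_lex_lead f mu <-> lex_lead f mu.
Proof.
rewrite /is_lex_lead /lex_lead -mcoeff_msupp; split=> [[_ [-> f_lead]]|[f_mu f_lead]].
  by split=> // nu; rewrite -mcoeff_msupp; apply: f_lead.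
split; first by apply: contraTneq f_mu => ->; rewrite msupp0.
by split=> // nu; rewrite mcoeff_msupp; apply: f_lead.
Qed.

Lemma initial_lexX k (I : {mpoly R[k]} -> Prop) mu :
  (forall f nu, I f -> I (f * 'X_[nu])) ->
  initial_lex I 'X_[mu] <-> exists2 f, I f & lex_lead f mu.
Proof.
move=> I_mulX; split=> [[s [s_lead X_mu]]|[f If f_lead]]; last first.
  exists [:: (1, 'X_[mu])]; rewrite big_seq1 mul1r; split=> // x.
  by rewrite mem_seq1 => /eqP-> /=; exists f, mu; rewrite is_lex_leadE.
have : ('X_[mu] : {mpoly R[k]})@_mu != 0 by rewrite mcoeffX eqxx oner_neq0.
rewrite X_mu raddf_sum /= => /sumr_neq0_exists[[c g] /s_lead[f [nu [If [f_lead ->]]]]].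
(* x^mu occurs in c * x^nu, so mu = nu + d and f * x^d leads with mu *)
rewrite /= -mcoeff_msupp (perm_mem (msuppMX _ _)) => /mapP[d _ ->].
move/is_lex_leadE: f_lead => [f_nu f_lead].
exists (f * 'X_[d]); first exact: I_mulX.
rewrite addmC; split=> [|rho]; first by rewrite mcoeffMX.
rewrite -mcoeff_msupp (perm_mem (msuppMX _ _)) => /mapP[e f_e ->] ne.
apply/lex_ltD2l/f_lead; first by rewrite -mcoeff_msupp.
by move=> e_nu; apply: ne; rewrite e_nu.
Qed.

Definition lead_vanishing k (W : {set {ffun 'I_k -> bool}}) (mu : 'X_{1..k}) :=
  exists2 f : {mpoly R[k]}, vanishing W f & lex_lead f mu.

Lemma in_Slex k (W : {set {ffun 'I_k -> bool}}) tau :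
  (tau \in Slex R W) = ~~ `[< lead_vanishing W (sqfree_mon tau) >].
Proof.
rewrite inE; congr (~~ _); apply/asbool_equiv_eq/initial_lexX => f nu f0 w /f0 fw.
by rewrite mevalM fw mul0r.
Qed.

Lemma lead_vanishing_monic k (W : {set {ffun 'I_k -> bool}}) mu :
  lead_vanishing W mu ->
  exists2 g : {mpoly R[k]}, vanishing W g & lex_lead g mu /\ g@_mu = 1.
Proof.
move=> [f f0 [f_mu f_lead]]; exists ((f@_mu)^-1 *: f).
  by move=> w /f0 fw; rewrite mevalZ fw mulr0.
split; last by rewrite mcoeffZ mulVf.
split=> [|nu]; rewrite mcoeffZ; first by rewrite mulVf ?oner_neq0.
by rewrite mulf_eq0 negb_or => /andP[_ /f_lead].
Qed.

End LeadingMonomials.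

Section Slices.
Variables (R : realType) (m : nat).
Implicit Types (f : {mpoly R[m.+1]}) (g h : {mpoly R[m]}) (v : {ffun 'I_m -> bool}).

Lemma mevalX_ext v a mu :
  'X_[mu].@[pt R (ext v a)] = 'X_[mbelast mu].@[pt R v] * a%:R ^+ mu ord_max.
Proof.
rewrite !mevalX big_ord_recr /=; congr (_ * _); last by rewrite /pt ffunE unlift_none.
apply: eq_bigr => i _; rewrite mnmE /pt ffunE.
have -> : widen_ord (leqnSn m) i = lift ord_max i by apply/val_inj/esym/lift_max.
by rewrite liftK.
Qed.

Lemma meval_mpoly_rcons g j v a :
  (mpoly_rcons g j).@[pt R (ext v a)] = a%:R ^+ j * g.@[pt R v].
Proof.
rewrite /mpoly_rcons raddf_sum /= (mevalE _ g) mulr_sumr; apply: eq_bigr => nu _.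
rewrite mevalZ mevalX_ext mbelast_rcons mrcons_last mevalX.
by rewrite [RHS]mulrCA (mulrC (a%:R ^+ j)).
Qed.

Lemma meval_mslice f a v : (mslice f a).@[pt R v] = f.@[pt R (ext v a)].
Proof.
rewrite /mslice raddf_sum /= (mevalE _ f); apply: eq_bigr => mu _.
by rewrite mevalZ -mevalX mevalX_ext -mulrA (mulrC (a%:R ^+ _)).
Qed.

Lemma ext_onto (w : {ffun 'I_m.+1 -> bool}) : exists v a, w = ext v a.
Proof.
exists [ffun i => w (lift ord_max i)], (w ord_max).
by apply/ffunP => i; rewrite !ffunE; case: unliftP => [j ->|->]; rewrite ?ffunE.
Qed.

Variable V : {set {ffun 'I_m.+1 -> bool}}.

Lemma vanishing_mslice f a : vanishing V f -> vanishing (slice V a) (mslice f a).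
Proof. by move=> f0 v; rewrite inE meval_mslice => /f0. Qed.

Lemma vanishing_linear_last g h :
  vanishing (slice V false) g -> vanishing (slice V true) (g + h) ->
  vanishing V (mpoly_rcons g 0 + mpoly_rcons h 1).
Proof.
move=> g0 gh0 w; have [v [a ->]] := ext_onto w.
rewrite mevalD !meval_mpoly_rcons expr0 mul1r expr1; case: a => Vw.
  by rewrite mul1r -mevalD gh0 // inE.
by rewrite mul0r addr0 g0 // inE.
Qed.

Lemma lead_vanishing_rcons0 nu :
  lead_vanishing R V (mrcons nu 0) <->
  lead_vanishing R (slice V false) nu /\ lead_vanishing R (slice V true) nu.
Proof.
split=> [[f f0 f_lead]|[/lead_vanishing_monic[g g0 [g_lead g1]]
                         /lead_vanishing_monic[h h0 [h_lead h1]]]].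
  have s1_nu : (mslice f true)@_nu = f@_(mrcons nu 0).
    by apply: mcoeff_mslice1 => t /(lex_lead_rcons_le f_lead); rewrite leqn0 => /eqP.
  split; [exists (mslice f false) | exists (mslice f true)]; try exact: vanishing_mslice;
    by apply: (lex_lead_mslice f_lead); rewrite ?mcoeff_mslice0 ?s1_nu f_lead.1.
(* g + (h - g) x_n: it is g on V^0 and h on V^1, and the x^nu x_n terms cancel *)
exists (mpoly_rcons g 0 + mpoly_rcons (h - g) 1).
  by apply: vanishing_linear_last; rewrite // addrC subrK.
apply: lex_lead_rcons => [|nu' t]; rewrite mcoeffD !mcoeff_mpoly_rcons /=.
  by rewrite addr0 g1 oner_neq0.
case: t => [|[|t]] /=; rewrite ?addr0 ?add0r ?eqxx //.
  by move/(lex_lead_le g_lead) => [|->]; [left|right].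
rewrite mcoeffB => hg_nu'; left.
have nu'_nu : nu' <> nu by move=> eq_nu; move: hg_nu'; rewrite eq_nu g1 h1 subrr eqxx.
have [g_nu'|g_nu'] := eqVneq g@_nu' 0.
  by move: hg_nu'; rewrite g_nu' subr0 => /(lex_lead_le h_lead)[].
by case/(lex_lead_le g_lead): g_nu'.
Qed.

Lemma lead_vanishing_rcons1 nu :
  lead_vanishing R V (mrcons nu 1) <->
  lead_vanishing R (slice V false) nu \/ lead_vanishing R (slice V true) nu.
Proof.
split=> [[f f0 f_lead]|[[g g0 g_lead]|[h h0 h_lead]]].
- have [f_nu0|f_nu0] := eqVneq f@_(mrcons nu 0) 0.
    right; exists (mslice f true); first exact: vanishing_mslice.
    apply: (lex_lead_mslice f_lead); rewrite (mcoeff_mslice1 (j := 1)) ?f_lead.1 //.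
    move=> t f_nut; have := lex_lead_rcons_le f_lead f_nut.
    by case: t f_nut => [|[|]] //; rewrite f_nu0 eqxx.
  left; exists (mslice f false); first exact: vanishing_mslice.
  by apply: (lex_lead_mslice f_lead); rewrite mcoeff_mslice0.
- exists (mpoly_rcons g 0 + mpoly_rcons (- g) 1).
    by apply: vanishing_linear_last; rewrite // subrr => w _; rewrite meval0.
  apply: lex_lead_rcons => [|nu' t]; rewrite mcoeffD !mcoeff_mpoly_rcons /=.
    by rewrite add0r mcoeffN oppr_eq0 g_lead.1.
  case: t => [|[|t]] /=; rewrite ?addr0 ?add0r ?mcoeffN ?oppr_eq0 ?eqxx //;
    by move/(lex_lead_le g_lead) => [|->]; [left|right].
- exists (mpoly_rcons 0 0 + mpoly_rcons h 1).
    by apply: vanishing_linear_last; rewrite ?add0r // => w _; rewrite meval0.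
  apply: lex_lead_rcons => [|nu' t]; rewrite mcoeffD !mcoeff_mpoly_rcons mcoeff0 /=.
    by rewrite add0r h_lead.1.
  case: t => [|[|t]] /=; rewrite ?addr0 ?add0r ?eqxx //.
  by move/(lex_lead_le h_lead) => [|->]; [left|right].
Qed.

End Slices.

Section EmbedLast.
Variable m : nat.
Implicit Types (s : {set 'I_m}) (K : {set {set 'I_m}}).

Lemma mem_embed s i : (lift ord_max i \in embed s) = (i \in s).
Proof. by rewrite mem_imset //; apply: lift_inj. Qed.

Lemma max_notin_embed s : ord_max \notin embed s.
Proof. by apply/imsetP => -[i _ /eqP]; rewrite (negbTE (neq_lift _ _)). Qed.

Lemma mem_setU1_embed s i : (lift ord_max i \in ord_max |: embed s) = (i \in s).
Proof. by rewrite in_setU1 eq_sym (negbTE (neq_lift _ _)) mem_embed. Qed.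

Variant embed_spec : {set 'I_m.+1} -> Type :=
  | EmbedNoMax s : embed_spec (embed s)
  | EmbedMax s : embed_spec (ord_max |: embed s).

Lemma embedP t : embed_spec t.
Proof.
pose s : {set 'I_m} := [set i | lift ord_max i \in t].
have [t_max|t_max] := boolP (ord_max \in t);
  [suff -> : t = ord_max |: embed s by apply: EmbedMax
  |suff -> : t = embed s by apply: EmbedNoMax];
  apply/setP=> i; case: (unliftP ord_max i) => [j ->|->];
  by rewrite ?mem_setU1_embed ?mem_embed ?inE ?eqxx
             ?(negbTE (max_notin_embed _)) ?(negbTE t_max).
Qed.

Lemma embed_inj : injective (@embed m).
Proof. by move=> s1 s2 eq_s; apply/setP=> i; rewrite -!mem_embed eq_s. Qed.

Lemma setU1_embed_inj : injective (fun s => ord_max |: embed s).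
Proof. by move=> s1 s2 eq_s; apply/setP=> i; rewrite -!mem_setU1_embed /= eq_s. Qed.

Lemma embed_neq_setU1 s s' : embed s != ord_max |: embed s'.
Proof. by apply: contraTneq (setU11 ord_max (embed s')) => <-; apply: max_notin_embed. Qed.

Lemma mem_embedK K s : (embed s \in embedK K) = (s \in K).
Proof. exact/mem_imset/embed_inj. Qed.

Lemma setU1_notin_embedK K s : (ord_max |: embed s \in embedK K) = false.
Proof.
by apply/imsetP => -[s' _ /eqP]; rewrite eq_sym (negbTE (embed_neq_setU1 _ _)).
Qed.

Lemma mem_coneK_embed K s : (embed s \in coneK K) = (s \in K).
Proof.
rewrite in_setU mem_embedK; case: (s \in K) => //=.
by apply/imsetP => -[s' _ /eqP]; rewrite (negbTE (embed_neq_setU1 _ _)).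
Qed.

Lemma mem_coneK_setU1 K s : (ord_max |: embed s \in coneK K) = (s \in K).
Proof. by rewrite in_setU setU1_notin_embedK (mem_imset _ _ setU1_embed_inj). Qed.

Lemma sqfree_mon_embed s : sqfree_mon (embed s) = mrcons (sqfree_mon s) 0.
Proof.
apply/mnmP => i; rewrite !mnmE; case: (unliftP ord_max i) => [j ->|->].
  by rewrite mem_embed mnmE.
by rewrite (negbTE (max_notin_embed s)).
Qed.

Lemma sqfree_mon_setU1_embed s :
  sqfree_mon (ord_max |: embed s) = mrcons (sqfree_mon s) 1.
Proof.
apply/mnmP => i; rewrite !mnmE; case: (unliftP ord_max i) => [j ->|->].
  by rewrite mem_setU1_embed mnmE.
by rewrite setU11.
Qed.

End EmbedLast.

Theorem lemma3p1 (R : realType) (m : nat) (V : {set {ffun 'I_m.+1 -> bool}}) :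
  V != set0 ->
  Slex R V =
    embedK (Slex R (slice V false)) :|: embedK (Slex R (slice V true)) :|:
    coneK (Slex R (slice V false) :&: Slex R (slice V true)).
Proof.
move=> _; apply/setP => t; case: (embedP t) => s.
  rewrite in_setU mem_coneK_embed in_setU !mem_embedK in_setI !in_Slex sqfree_mon_embed.
  rewrite (asbool_equiv_eq (lead_vanishing_rcons0 _ _ _)) asbool_and.
  by case: `[< _ >]; case: `[< _ >].
rewrite in_setU mem_coneK_setU1 in_setU !setU1_notin_embedK in_setI !in_Slex.
rewrite sqfree_mon_setU1_embed (asbool_equiv_eq (lead_vanishing_rcons1 _ _ _)).
by rewrite asbool_or negb_or.
Qed.
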